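(* Let $G$ be a cyclic group of prime order $p$ generated by $g$, and $I=\ker(\mathbb{Z}_p[G]\to\mathbb{Z}_p)$. Then: $\hat H^*(g,S^*(\mathbb{Z}_p))$ is a polynomial algebra over $\mathbb{F}_p$ on one ordinary generator of degree $1$; $\hat H^*(g,S^*(\mathbb{Z}_p[G]))$ is a polynomial algebra on one ordinary generator of degree $p$; and if $p$ is odd, $\hat H^*(g,S^*(I))$ is the tensor product of a polynomial algebra on one ordinary generator of degree $p$ and an exterior algebra on one super generator of degree $1$.
   Context: $S^*(A)=\bigoplus_n S^n(A)$ is the symmetric algebra over $\mathbb{Z}_p$, graded by $n$. For a graded $G$-algebra $R$, $\hat H^*(g,R)=\hat H^0(g,R)\oplus\hat H^1(g,R)$ (Tate cohomology computed degreewise) is a graded super-commutative $\mathbb{F}_p$-algebra via cup product (identifying $\hat H^2$ with $\hat H^0$ by periodicity of cohomology of cyclic groups); elements of $\hat H^0$ are called ordinary and elements of $\hat H^1$ super. *)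

From HB Require Import structures.
From Stdlib Require Import ProofIrrelevance FunctionalExtensionality.
From mathcomp Require Import all_boot all_order all_algebra.
From mathcomp Require Import boolp.
From mathcomp Require Import mpoly.
Set Implicit Arguments. Unset Strict Implicit. Unset Printing Implicit Defensive.
Import Order.TTheory GRing.Theory Num.Theory.
Local Open Scope ring_scope.

(* The ring Z_p of p-adic integers, as the inverse limit of the rings  *)
(* Z/p^(n+1): an element is a compatible sequence (f n)_n of integers  *)
(* with f n = f (n+1) mod p^(n+1) (hence 0 <= f n < p^(n+1)).          *)
(* To always get a nontrivial ring we use the modulus base             *)
(* zq p := p.-2.+2 (= p for every p >= 2, in particular p prime).     *)
Section PAdic.
Variable p : nat.
Definition zq : nat := p.-2.+2.
Local Notation md n := ((zq ^ n.+1)%N%:Z).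

Definition zp_compat (f : nat -> int) := forall n, f n = modz (f n.+1) (md n).

Record padic_int := MkZp { zpval :> nat -> int; zpvalP : zp_compat zpval }.

HB.instance Definition _ := gen_eqMixin padic_int.
HB.instance Definition _ := gen_choiceMixin padic_int.

Lemma zp_ext (a b : padic_int) : (forall n, a n = b n) -> a = b.
Proof.
case: a b => [a Ha] [b Hb] /= E.
have eab : a = b by apply: functional_extensionality.
subst b; congr MkZp; apply: proof_irrelevance.
Qed.

Lemma md_gt0 n : (0 < md n)%R.
Proof. by rewrite ltz_nat expn_gt0. Qed.

Lemma md_neq0 n : md n != 0.
Proof. by rewrite eqz_nat expn_eq0. Qed.

Lemma modz_modS (x : int) n : modz (modz x (md n.+1)) (md n) = modz x (md n).
Proof.
apply/eqP; rewrite eqz_mod_dvd.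
have -> : modz x (md n.+1) - x = - (divz x (md n.+1) * md n.+1).
  by rewrite /modz addrC addrA addNr add0r.
rewrite rpredN; apply: dvdz_mull.
by change (zq ^ n.+1 %| zq ^ n.+2)%N; exact: dvdn_exp2l.
Qed.

Lemma zp_canon (a : padic_int) n : modz (a n) (md n) = a n.
Proof. by rewrite (zpvalP a n) modz_mod. Qed.

Definition zp_lift (f : nat -> int) (Hf : forall n, modz (f n) (md n) = modz (f n.+1) (md n)) : padic_int.
Proof.
exists (fun n => modz (f n) (md n)) => n; by rewrite modz_modS Hf.
Defined.

Lemma zp_liftE f Hf n : @zp_lift f Hf n = modz (f n) (md n).
Proof. by []. Qed.

Lemma zp_addP (a b : padic_int) n : modz (a n + b n) (md n) = modz (a n.+1 + b n.+1) (md n).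
Proof. by rewrite (zpvalP a n) (zpvalP b n) modzDml modzDmr. Qed.
Lemma zp_mulP (a b : padic_int) n : modz (a n * b n) (md n) = modz (a n.+1 * b n.+1) (md n).
Proof. by rewrite (zpvalP a n) (zpvalP b n) modzMml modzMmr. Qed.
Lemma zp_oppP (a : padic_int) n : modz (- a n) (md n) = modz (- a n.+1) (md n).
Proof. by rewrite (zpvalP a n) modzNm. Qed.
Lemma zp_cstP (c : int) n : modz c (md n) = modz c (md n).
Proof. by []. Qed.

Definition zp_add (a b : padic_int) := zp_lift (zp_addP a b).
Definition zp_mul (a b : padic_int) := zp_lift (zp_mulP a b).
Definition zp_opp (a : padic_int) := zp_lift (zp_oppP a).
Definition zp_zero := zp_lift (zp_cstP 0).
Definition zp_one := zp_lift (zp_cstP 1).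

Lemma zp_addA : associative zp_add.
Proof. by move=> a b c; apply: zp_ext => n; rewrite !zp_liftE modzDml modzDmr addrA. Qed.
Lemma zp_addC : commutative zp_add.
Proof. by move=> a b; apply: zp_ext => n; rewrite !zp_liftE addrC. Qed.
Lemma zp_add0 : left_id zp_zero zp_add.
Proof. by move=> a; apply: zp_ext => n; rewrite !zp_liftE modzDml add0r zp_canon. Qed.
Lemma zp_addN : left_inverse zp_zero zp_opp zp_add.
Proof. by move=> a; apply: zp_ext => n; rewrite !zp_liftE modzDml addNr. Qed.

HB.instance Definition _ := GRing.isZmodule.Build padic_int zp_addA zp_addC zp_add0 zp_addN.

Lemma zp_mulA : associative zp_mul.
Proof. by move=> a b c; apply: zp_ext => n; rewrite !zp_liftE modzMml modzMmr mulrA. Qed.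
Lemma zp_mulC : commutative zp_mul.
Proof. by move=> a b; apply: zp_ext => n; rewrite !zp_liftE mulrC. Qed.
Lemma zp_mul1 : left_id zp_one zp_mul.
Proof. by move=> a; apply: zp_ext => n; rewrite !zp_liftE modzMml mul1r zp_canon. Qed.
Lemma zp_mulD : left_distributive zp_mul (@GRing.add padic_int).
Proof.
move=> a b c; change (zp_mul (zp_add a b) c = zp_add (zp_mul a c) (zp_mul b c)).
apply: zp_ext => n.
by rewrite !zp_liftE modzMml modzDml modzDmr mulrDl.
Qed.
Lemma zp_one_neq0 : zp_one != (0 : padic_int).
Proof.
apply/eqP; change (zp_one <> zp_zero) => /(congr1 (fun a : padic_int => a 0%N)).
rewrite !zp_liftE mod0z modz_small //.
Qed.

HB.instance Definition _ :=
  GRing.Zmodule_isComNzRing.Build padic_int zp_mulA zp_mulC zp_mul1 zp_mulD zp_one_neq0.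

End PAdic.

(* G = <g> is cyclic of order p.  A G-lattice which is free of rank r  *)
(* over the coefficient ring R, with basis (e_j)_{j<r}, is given by    *)
(* the integer matrix A of g:  g e_j = sum_i A i j e_i.                *)
(* Its symmetric algebra S^*(M) is the polynomial ring R[x_0..x_{r-1}] *)
(* ({mpoly R[r]}, x_j = e_j), graded by total degree (S^n = the        *)
(* homogeneous polynomials of degree n), on which g acts by the        *)
(* algebra automorphism x_j |-> sum_i A i j x_i.                       *)
Section Tate.
Variables (R : comNzRingType) (p r : nat) (A : 'M[int]_r).

Definition gvars : r.-tuple {mpoly R[r]} :=
  [tuple \sum_(i < r) (A i j)%:~R *: 'X_i | j < r].

Definition gact (f : {mpoly R[r]}) : {mpoly R[r]} := f \mPo gvars.
Definition gpow (k : nat) (f : {mpoly R[r]}) := iter k gact f.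
Definition normop (f : {mpoly R[r]}) := \sum_(k < p) gpow k f.

Definition isSn (n : nat) (f : {mpoly R[r]}) := all (fun m => mdeg m == n) (msupp f).

(* Tate cohomology of <g> acting on S^n(M), computed degreewise:
     H^0 = ker(g - 1) / im N ,   H^1 = ker N / im (g - 1)            *)
Definition Z0 n f := isSn n f /\ gact f = f.
Definition B0 n f := exists h, isSn n h /\ f = normop h.
Definition Z1 n f := isSn n f /\ normop f = 0.
Definition B1 n f := exists h, isSn n h /\ f = gact h - h.

(* cup product H^1 x H^1 -> H^2 = H^0 for the cyclic group <g>
   (on representatives):  a u b = sum_{0 <= i < j < p} g^i a * g^j b.
   Products involving a class of H^0 are products of representatives. *)
Definition cup11 (a b : {mpoly R[r]}) :=
  \sum_(j < p) \sum_(i < j) gpow i a * gpow j b.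

Definition H0_zero n := forall f, Z0 n f -> B0 n f.
Definition H1_zero n := forall f, Z1 n f -> B1 n f.
Definition H0_line n x :=
  Z0 n x /\ ~ B0 n x /\ forall f, Z0 n f -> exists c : R, B0 n (f - c *: x).
Definition H1_line n x :=
  Z1 n x /\ ~ B1 n x /\ forall f, Z1 n f -> exists c : R, B1 n (f - c *: x).

(* H^*(g, S^*(M)) is a polynomial algebra over F_p on one ordinary
   generator c of degree d: the monomials c^k (k >= 0), of degree dk,
   form a basis of the graded F_p-algebra H^*.                        *)
Definition Tate_poly_ord (d : nat) :=
  exists c, Z0 d c /\
    forall n, H1_zero n /\
      (if (d %| n)%N then H0_line n (c ^+ (n %/ d)) else H0_zero n).

(* H^*(g, S^*(M)) is the tensor product of a polynomial algebra on one
   ordinary generator c of degree d and an exterior algebra on one super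
   generator e of degree 1: e u e = 0 and the monomials c^k (degree dk,
   ordinary) and c^k e (degree dk+1, super) form a basis of H^*.       *)
Definition Tate_poly_ext (d : nat) :=
  exists c e, Z0 d c /\ Z1 1 e /\ B0 2 (cup11 e e) /\
    forall n,
      (if (d %| n)%N then H0_line n (c ^+ (n %/ d)) else H0_zero n) /\
      (if (n %% d == 1)%N then H1_line n (c ^+ (n %/ d) * e) else H1_zero n).

End Tate.

Definition A_triv : 'M[int]_1 := 1%:M.
(* The group ring Z_p[G], basis e_i = g^i (i < p): g e_i = e_{i+1 mod p}. *)
Definition A_reg (p : nat) : 'M[int]_p := \matrix_(i, j) ((i == ordS j) : int).
(* The augmentation ideal I = ker(Z_p[G] -> Z_p), with Z_p-basis
   y_k = e_{k+1} - e_0 (k < p-1):  g y_k = y_{k+1} - y_0 for k+1 < p-1,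
   and g y_{p-2} = e_0 - e_1 = - y_0.                                 *)
Definition A_aug (p : nat) : 'M[int]_p.-1 :=
  \matrix_(i, j) (((i : nat) == j.+1 : int) - ((i : nat) == 0%N : int)).

From HB Require Import structures.
From mathcomp Require Import all_boot all_order all_algebra.
From mathcomp Require Import mpoly.
From mathcomp Require Import fingroup perm cyclic.
From mathcomp Require Import zify ring.

(* When M is a permutation lattice (Z_p with trivial action, or Z_p[G]), g
   permutes the monomials, in orbits of length 1 or p.  An invariant supported
   on free orbits is the norm of its restriction to orbit representatives, and
   a norm-zero cochain on free orbits telescopes into a coboundary; a fixed
   monomial x^m has norm p x^m.  As Z_p is p-torsion-free and p is not a unit
   in Z_p, H^1 vanishes and H^0 has the fixed monomials as an F_p-basis; these
   are the powers of the product x_0 * ... * x_(r-1).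

   For the augmentation ideal, g - 1 maps Z_p[G] onto I with kernel spanned by
   sigma = e_0 + ... + e_(p-1), whence exact sequences of G-modules
   0 -> S^(n-1)(Z_p[G]) --sigma--> S^n(Z_p[G]) -> S^n(I) -> 0.  Since H^1 of
   S^*(Z_p[G]) vanishes and sigma = N x_0 kills H^0, the long exact sequence
   gives H^0(S^n I) = H^0(S^n Z_p[G]) and H^1(S^n I) = H^0(S^(n-1) Z_p[G]);
   thus H^1 is spanned by the classes c^k e, with c the degree-p generator and
   e the image of x_0. *)

Set Implicit Arguments. Unset Strict Implicit. Unset Printing Implicit Defensive.
Import Order.TTheory GRing.Theory Num.Theory.
Local Open Scope ring_scope.

Section Substitution.
Variable R : comNzRingType.

Lemma comp_mpolyA n k l (F : {mpoly R[n]}) (t : n.-tuple {mpoly R[k]})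
    (u : k.-tuple {mpoly R[l]}) :
  (F \mPo t) \mPo u = F \mPo [tuple tnth t i \mPo u | i < n].
Proof.
rewrite (comp_mpolyEX F t) (comp_mpolyEX F) raddf_sum /=; apply: eq_bigr => m _.
rewrite comp_mpolyZ !comp_mpolyX rmorph_prod /=; congr (_ *: _).
by apply: eq_bigr => i _; rewrite rmorphXn /= tnth_mktuple.
Qed.

Lemma comp_mpoly_homog n k d (F : {mpoly R[n]}) (t : n.-tuple {mpoly R[k]}) :
  (forall i, tnth t i \is 1.-homog) -> F \is d.-homog -> F \mPo t \is d.-homog.
Proof.
move=> ht /dhomogP hF; rewrite comp_mpolyE big_seq; apply: rpred_sum => m mF.
apply: rpredZ; have deg_m : mdeg m = d := hF m mF.
have -> : d = (\sum_i m i)%N by rewrite -deg_m mdegE.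
elim/big_rec2: _ => [|i d' P _ hP]; first exact: dhomog1.
by have := dhomogM (dhomogMn (m i) (ht i)) hP; rewrite mul1n.
Qed.

Lemma isSnE r n (f : {mpoly R[r]}) : isSn n f = (f \is n.-homog).
Proof. by rewrite dhomogE. Qed.

Definition mrestr r (P : pred 'X_{1..r}) (u : {mpoly R[r]}) : {mpoly R[r]} :=
  \sum_(m <- msupp u | P m) u@_m *: 'X_[m].

Lemma mcoeff_mrestr r P (u : {mpoly R[r]}) m :
  (mrestr P u)@_m = if P m then u@_m else 0.
Proof.
rewrite /mrestr raddf_sum /=.
under eq_bigr do rewrite mcoeffZ mcoeffX.
rewrite big_mkcond /=; case: (boolP (m \in msupp u)) => mu.
  rewrite (bigD1_seq m) ?msupp_uniq //= big1 ?addr0.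
    by case: (P m); rewrite ?eqxx ?mulr1.
  by move=> m' ne; case: (P m'); rewrite // (negbTE ne) mulr0.
rewrite (memN_msupp_eq0 mu) if_same big1 // => m' _; case: (P m') => //.
by case: eqP => [->|]; rewrite ?(memN_msupp_eq0 mu) ?mul0r ?mulr0.
Qed.

Lemma mrestr_homog r P (u : {mpoly R[r]}) d :
  u \is d.-homog -> mrestr P u \is d.-homog.
Proof.
move=> /dhomogP hu; rewrite /mrestr big_seq_cond; apply: rpred_sum => m /andP[mu _].
by apply: rpredZ; rewrite dhomogX; apply/eqP; exact: hu.
Qed.

End Substitution.

Section Multiples.
Variables (T : comPzRingType) (d : T).

Definition multiple (a : T) := exists q, a = d * q.

Lemma multiple0 : multiple 0.
Proof. by exists 0; rewrite mulr0. Qed.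

Lemma multipleD a b : multiple a -> multiple b -> multiple (a + b).
Proof. by move=> [x ->] [y ->]; exists (x + y); rewrite mulrDr. Qed.

Lemma multipleN a : multiple a -> multiple (- a).
Proof. by move=> [x ->]; exists (- x); rewrite mulrN. Qed.

Lemma multipleMl a b : multiple a -> multiple (b * a).
Proof. by move=> [x ->]; exists (b * x); rewrite mulrCA. Qed.

Lemma multipleMr a b : multiple a -> multiple (a * b).
Proof. by move=> [x ->]; exists (x * b); rewrite mulrA. Qed.

Lemma multiple_sum I (s : seq I) (F : I -> T) :
  (forall i, multiple (F i)) -> multiple (\sum_(i <- s) F i).
Proof. by move=> h; elim/big_rec: _ => [|i x _]; [exact: multiple0 | exact: multipleD]. Qed.

Lemma multiple_subM a1 b1 a2 b2 :
  multiple (a1 - b1) -> multiple (a2 - b2) -> multiple (a1 * a2 - b1 * b2).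
Proof.
move=> h1 h2; have -> : a1 * a2 - b1 * b2 = (a1 - b1) * a2 + b1 * (a2 - b2) by ring.
by apply: multipleD; [exact: multipleMr | exact: multipleMl].
Qed.

Lemma multiple_subX a b k : multiple (a - b) -> multiple (a ^+ k - b ^+ k).
Proof.
move=> h; elim: k => [|k ih]; first by rewrite !expr0 subrr; exact: multiple0.
by rewrite !exprS; apply: multiple_subM.
Qed.

Lemma multiple_subprod m (f g : 'I_m -> T) :
  (forall i, multiple (f i - g i)) -> multiple (\prod_i f i - \prod_i g i).
Proof.
move=> h; elim/big_rec2: _ => [|i x y _ hxy]; last exact: multiple_subM.
by rewrite subrr; exact: multiple0.
Qed.

End Multiples.

Lemma multiple_comp_mpoly (R : comNzRingType) n (d F : {mpoly R[n]})
    (t : n.-tuple {mpoly R[n]}) :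
  (forall i, multiple d (tnth t i - 'X_i)) -> multiple d (F \mPo t - F).
Proof.
move=> ht; rewrite comp_mpolyEX {3}[F]mpolyE -sumrB; apply: multiple_sum => m.
rewrite -scalerBr -mul_mpolyC; apply: multipleMl.
rewrite comp_mpolyX mpolyXE_id; apply: multiple_subprod => i.
exact: multiple_subX.
Qed.

Section Action.
Variables (R : comNzRingType) (r : nat) (A : 'M[int]_r).
Implicit Types (f u v : {mpoly R[r]}).

HB.instance Definition _ := GRing.LRMorphism.copy (gact A) (comp_mpoly (gvars R A)).

Lemma gpow_is_zmod_morphism k : zmod_morphism (@gpow R r A k).
Proof. by elim: k => [|k ih] f g //=; rewrite ih rmorphB. Qed.

HB.instance Definition _ k :=
  GRing.isZmodMorphism.Build _ _ (@gpow R r A k) (gpow_is_zmod_morphism k).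

Lemma gpow_is_monoid_morphism k : monoid_morphism (@gpow R r A k).
Proof.
elim: k => [|k [ih1 ihM]]; first by split.
by split=> [|f g] /=; rewrite ?ih1 ?ihM ?rmorph1 ?rmorphM.
Qed.

HB.instance Definition _ k :=
  GRing.isMonoidMorphism.Build _ _ (@gpow R r A k) (gpow_is_monoid_morphism k).

Lemma gpow_is_scalable k : scalable (@gpow R r A k).
Proof. by elim: k => [|k ih] c f //=; rewrite ih linearZ. Qed.

HB.instance Definition _ k :=
  GRing.isScalable.Build R _ _ *:%R (@gpow R r A k) (gpow_is_scalable k).

Lemma gact_msym (s : 'S_r) :
  (forall j, tnth (gvars R A) j = 'X_(s j)) -> forall f, gact A f = msym s f.
Proof.
move=> hs f; rewrite /gact -[RHS]comp_mpoly_id msym_mPo; congr comp_mpoly.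
by apply: eq_from_tnth => j; rewrite hs !tnth_mktuple.
Qed.

Lemma gactXU i : gact A 'X_i = tnth (gvars R A) i.
Proof. by rewrite /gact comp_mpolyXU -tnth_nth. Qed.

Lemma gact_homog d f : f \is d.-homog -> gact A f \is d.-homog.
Proof.
apply: comp_mpoly_homog => i; rewrite tnth_mktuple.
by apply: rpred_sum => j _; apply: rpredZ; rewrite dhomogX /= mdeg1.
Qed.

Lemma gpow_homog d k f : f \is d.-homog -> gpow A k f \is d.-homog.
Proof. by move=> hf; elim: k => //= k; apply: gact_homog. Qed.

Lemma gpowSr k f : gpow A k.+1 f = gpow A k (gact A f).
Proof. exact: iterSr. Qed.

Lemma gpow_fix k f : gact A f = f -> gpow A k f = f.
Proof. by move=> hf; elim: k => //= k ->. Qed.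

Lemma gact_partial_norm j f :
  gact A (\sum_(i < j) gpow A i f) - \sum_(i < j) gpow A i f = gpow A j f - f.
Proof.
rewrite raddf_sum -sumrB -(big_mkord xpredT (fun i => gpow A i.+1 f - gpow A i f)).
exact: telescope_sumr.
Qed.

Variable p : nat.

Lemma normop_is_zmod_morphism : zmod_morphism (@normop R p r A).
Proof.
by move=> f g; rewrite /normop -sumrB; apply: eq_bigr => k _; rewrite raddfB.
Qed.

HB.instance Definition _ :=
  GRing.isZmodMorphism.Build _ _ (@normop R p r A) normop_is_zmod_morphism.

Lemma normop_is_scalable : scalable (@normop R p r A).
Proof.
by move=> c f; rewrite /normop scaler_sumr; apply: eq_bigr => k _; rewrite linearZ.
Qed.

HB.instance Definition _ :=
  GRing.isScalable.Build R _ _ *:%R (@normop R p r A) normop_is_scalable.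

Lemma normop_homog d f : f \is d.-homog -> normop p A f \is d.-homog.
Proof. by move=> hf; apply: rpred_sum => k _; apply: gpow_homog. Qed.

Lemma normopMl u f : gact A u = u -> normop p A (u * f) = u * normop p A f.
Proof.
move=> hu; rewrite /normop mulr_sumr; apply: eq_bigr => k _.
by rewrite rmorphM /= gpow_fix.
Qed.

Section PeriodicAction.
Hypothesis gpow_order : forall f, gpow A p f = f.

Lemma normop_shift f : \sum_(k < p) gpow A k.+1 f = normop p A f.
Proof.
apply/eqP; rewrite -subr_eq0 -sumrB.
rewrite -(big_mkord xpredT (fun k => gpow A k.+1 f - gpow A k f)).
by rewrite telescope_sumr // gpow_order subrr.
Qed.

Lemma normop_gact f : normop p A (gact A f - f) = 0.
Proof.
apply/eqP; rewrite raddfB /= -(normop_shift f) subr_eq0; apply/eqP/eq_bigr => k _.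
by rewrite gpowSr.
Qed.

Lemma gact_normop f : gact A (normop p A f) = normop p A f.
Proof. by apply/eqP; rewrite -subr_eq0 gact_partial_norm gpow_order subrr. Qed.

Lemma gact_cup11 (a b : {mpoly R[r]}) :
  gact A (cup11 p A a b) - cup11 p A a b = normop p A a * b - a * normop p A b.
Proof.
pose S j := \sum_(i < j) gpow A i a.
pose T j := S j * gpow A j b.
have cupE : cup11 p A a b = \sum_(j < p) T j.
  by apply: eq_bigr => j _; rewrite /T /S mulr_suml.
have gactS j : gact A (S j) = S j.+1 - a.
  rewrite -[LHS](subrK (S j)) gact_partial_norm /S big_ord_recr /=; ring.
have gactT j : gact A (T j) = T j.+1 - a * gpow A j.+1 b.
  by rewrite rmorphM /= gactS mulrBl.
have T0 : T 0 = 0 by rewrite /T /S big_ord0 mul0r.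
have Tp : T p = normop p A a * b by rewrite /T gpow_order.
have := telescope_sumr T (leq0n p); rewrite big_mkord sumrB T0 Tp subr0.
move/eqP; rewrite subr_eq => /eqP shiftT.
rewrite cupE raddf_sum /=; under eq_bigr do rewrite gactT.
by rewrite sumrB -mulr_sumr normop_shift shiftT; ring.
Qed.

End PeriodicAction.
End Action.

(** * Permutation lattices *)

Lemma sum_periodic_rev (V : zmodType) p (F : nat -> V) : (0 < p)%N ->
  (forall k, F (k %% p)%N = F k) -> \sum_(j < p) F (p - j)%N = \sum_(k < p) F k.
Proof.
move=> p_gt0 hF; pose h (j : 'I_p) : 'I_p := Ordinal (ltn_pmod (p - j)%N p_gt0).
have h_inj : injective h.
  move=> j1 j2 /(congr1 val) /=; have := ltn_ord j1; have := ltn_ord j2.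
  case: (posnP j1) => [e1|g1]; case: (posnP j2) => [e2|g2] l2 l1.
  - by move=> _; apply/val_inj; rewrite /= e1 e2.
  - by rewrite e1 subn0 modnn modn_small; lia.
  - by rewrite e2 subn0 modnn modn_small; lia.
  - by rewrite !modn_small; try lia; move=> e; apply/val_inj => /=; lia.
by rewrite [RHS](reindex_inj h_inj) /=; apply: eq_bigr => j _; rewrite hF.
Qed.

Definition mconst r c : 'X_{1..r} := [multinom c | _ < r].

Lemma mdeg_mconst r c : mdeg (mconst r c) = (c * r)%N.
Proof.
rewrite mdegE (eq_bigr (fun _ => c)) ?sum_nat_const ?card_ord 1?mulnC //.
by move=> i _; rewrite mnmE.
Qed.

Lemma mconst_mulmn r c k : (mconst r c *+ k)%MM = mconst r (c * k).
Proof. by apply/mnmP => i; rewrite mulmnE !mnmE. Qed.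

Section PermutationLattice.
Variables (R : comNzRingType) (p r : nat) (A : 'M[int]_r) (s : 'S_r).
Hypotheses (p_prime : prime p) (s_order : (s ^+ p)%g = 1%g).
Hypothesis gactE : forall f : {mpoly R[r]}, gact A f = msym s f.
Hypotheses (R_torsionfree : forall a : R, a *+ p = 0 -> a = 0)
  (R_p_nonunit : forall a : R, a *+ p != 1).
Implicit Types (u : {mpoly R[r]}) (m : 'X_{1..r}).

Local Notation "m # t" := [multinom m ((t)%g i) | i < r]
  (at level 40, left associativity, format "m # t").

Let p_gt0 : (0 < p)%N := prime_gt0 p_prime.

Lemma gpowE k u : gpow A k u = msym (s ^+ k) u.
Proof. by elim: k => [|k /= ->]; rewrite ?msym1m // gactE -msymMm -expgSr. Qed.

Lemma mcoeff_gpow k u m : (gpow A k u)@_m = u@_(m # s ^+ k).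
Proof. by rewrite gpowE mcoeff_sym. Qed.

Lemma mperm_expD i j m : m # s ^+ (i + j) = m # s ^+ j # s ^+ i.
Proof. by rewrite expgD mpermM. Qed.

Lemma mperm_exp_mod k m : m # s ^+ (k %% p) = m # s ^+ k.
Proof. by rewrite expg_mod. Qed.

Lemma mperm_exp_fix (t : 'S_r) k m : m # t = m -> m # t ^+ k = m.
Proof. by move=> h; elim: k => [|k ih]; rewrite ?mperm1 // expgSr mpermM h. Qed.

Definition mfixed m := m # s == m.

Lemma mfixed_mperm k m : mfixed (m # s ^+ k) = mfixed m.
Proof.
by rewrite /mfixed -mpermM -expgS expgSr mpermM (inj_eq (@mperm_inj _ (s ^+ k)%g)).
Qed.

(* A free orbit has exactly p elements: if s^d fixes m with 0 < d < p, then s^d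
   generates <[s]>, hence s fixes m. *)
Lemma mperm_exp_inj m i j : ~~ mfixed m -> (i < p)%N -> (j < p)%N ->
  m # s ^+ i = m # s ^+ j -> i = j.
Proof.
move=> m_free; wlog lt_ij : i j / (i < j)%N.
  move=> wl ip jp e; case: (ltngtP i j) => [lt|lt|//]; first exact: wl.
  by apply/esym/wl.
move=> _ jp e; case/negP: m_free.
have fix_d : m # s ^+ (j - i) = m.
  by apply: (@mperm_inj _ (s ^+ i)%g); rewrite /= -mperm_expD (subnKC (ltnW lt_ij)) e.
have cop : coprime #[s]%g (j - i).
  apply: (@coprime_dvdl _ p); first by rewrite order_dvdn s_order.
  by rewrite prime_coprime //; apply/negP => /dvdn_leq; lia.
have := generator_coprime s (j - i); rewrite cop => /eqP gen.
have /cycleP [k ek] : s \in <[s ^+ (j - i)]>%g by rewrite -gen cycle_id.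
by rewrite /mfixed ek; apply/eqP/mperm_exp_fix.
Qed.

(* A free orbit is represented by its least element. *)
Definition mrep m := ~~ mfixed m && [forall k : 'I_p, (m <= m # s ^+ k)%O].

Lemma mrep_unique m : ~~ mfixed m ->
  exists k0 : 'I_p, forall j : 'I_p, mrep (m # s ^+ j) = (j == k0).
Proof.
move=> m_free; pose i0 : 'I_p := Ordinal p_gt0.
case: (@arg_minP _ _ _ i0 xpredT (fun k : 'I_p => m # s ^+ k) isT) => k0 _ k0_min.
exists k0 => j; rewrite /mrep mfixed_mperm m_free /=.
case: (eqVneq j k0) => [-> | ne].
  apply/forallP => k; rewrite -mperm_expD -(mperm_exp_mod (k + k0)).
  exact: (k0_min (Ordinal (ltn_pmod (k + k0)%N p_gt0)) isT).
apply/negP => /forallP j_min.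
pose a : 'I_p := Ordinal (ltn_pmod (k0 + p - j)%N p_gt0).
have := j_min a; rewrite -mperm_expD -(mperm_exp_mod (a + j)) /=.
have -> : (((k0 + p - j) %% p + j) %% p = k0)%N.
  rewrite modnDml; have -> : (k0 + p - j + j = k0 + p)%N by have := ltn_ord j; lia.
  by rewrite modnDr modn_small.
move=> le_j_k0; have le_k0_j := k0_min j isT.
have e : m # s ^+ j = m # s ^+ k0 by apply/le_anti; rewrite le_j_k0 le_k0_j.
have /val_inj ejk := mperm_exp_inj m_free (ltn_ord j) (ltn_ord k0) e.
by rewrite ejk eqxx in ne.
Qed.

Lemma sum_mrep (c : R) m : ~~ mfixed m ->
  \sum_(j < p) (if mrep (m # s ^+ j) then c else 0) = c.
Proof.
move=> m_free; case: (mrep_unique m_free) => k0 hk.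
by rewrite (bigD1 k0) //= hk eqxx big1 ?addr0 // => j ne; rewrite hk (negbTE ne).
Qed.

Definition fixed_part u := mrestr mfixed u.
Definition rep_part u := mrestr mrep u.

Lemma mcoeff_gpow_rep_part j u m : (gpow A j (rep_part u))@_m =
  if mrep (m # s ^+ j) then u@_(m # s ^+ j) else 0.
Proof. by rewrite mcoeff_gpow mcoeff_mrestr. Qed.

Lemma orbit_decomposition u :
  u = fixed_part u + \sum_(j < p) gpow A j (rep_part (gpow A (p - j) u)).
Proof.
apply/mpolyP => m; rewrite mcoeffD mcoeff_mrestr raddf_sum /=.
under eq_bigr => j _.
  rewrite mcoeff_gpow_rep_part mcoeff_gpow -mperm_expD subnK ?s_order ?mperm1;
    last exact: ltnW.
  over.
case: (boolP (mfixed m)) => m_fix; last by rewrite add0r sum_mrep.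
by rewrite big1 ?addr0 // => j _; rewrite /mrep mfixed_mperm m_fix.
Qed.

Lemma invariant_decomposition u : gact A u = u ->
  u = fixed_part u + normop p A (rep_part u).
Proof.
move=> hu; rewrite {1}[u]orbit_decomposition /normop; congr (_ + _).
by apply: eq_bigr => j _; rewrite (gpow_fix _ hu).
Qed.

Lemma mcoeff_normop u m : (normop p A u)@_m = \sum_(k < p) u@_(m # s ^+ k).
Proof. by rewrite raddf_sum; apply: eq_bigr => k _; exact: mcoeff_gpow. Qed.

Lemma mcoeff_normop_fixed u m : mfixed m -> (normop p A u)@_m = u@_m *+ p.
Proof.
move=> /eqP m_fix; rewrite mcoeff_normop -[X in _ *+ X]card_ord -sumr_const.
by apply: eq_bigr => k _; rewrite mperm_exp_fix.
Qed.

Lemma gact_fixed_monomial m : mfixed m -> gact A 'X_[m] = 'X_[m] :> {mpoly R[r]}.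
Proof.
move=> /eqP m_fix; rewrite gactE msymX; congr 'X_[_].
by rewrite -{1}m_fix -mpermM mulVg mperm1.
Qed.

Lemma fixed_monomial_not_norm m : mfixed m ->
  ~ exists h : {mpoly R[r]}, 'X_[m] = normop p A h.
Proof.
move=> m_fix [h /(congr1 (mcoeff m))].
rewrite mcoeff_normop_fixed // mcoeffX eqxx => e.
by move: (R_p_nonunit h@_m); rewrite -e eqxx.
Qed.

(* Norm-zero cochains on a free orbit telescope into coboundaries; the fixed
   part vanishes since its coefficients are killed by p. *)
Lemma perm_H1_zero n : H1_zero R p A n.
Proof.
move=> u [hu hN]; rewrite isSnE in hu.
have fix0 : fixed_part u = 0.
  apply/mpolyP => m; rewrite mcoeff_mrestr mcoeff0; case: ifP => // m_fix.
  by apply: R_torsionfree; rewrite -mcoeff_normop_fixed // hN mcoeff0.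
pose f j := rep_part (gpow A (p - j) u).
have sum_f : \sum_(j < p) f j = 0.
  apply/mpolyP => m; rewrite raddf_sum /= mcoeff0 /f /rep_part.
  under eq_bigr => j _ do rewrite mcoeff_mrestr.
  case: (mrep m); last by rewrite big1.
  under eq_bigr => j _ do rewrite mcoeff_gpow.
  rewrite (@sum_periodic_rev _ p (fun k => u@_(m # s ^+ k))) //; last first.
    by move=> k; rewrite mperm_exp_mod.
  by rewrite -mcoeff_normop hN mcoeff0.
exists (\sum_(j < p) \sum_(i < j) gpow A i (f j)); split.
  rewrite isSnE; apply: rpred_sum => j _; apply: rpred_sum => i _.
  by apply/gpow_homog/mrestr_homog/gpow_homog.
rewrite raddf_sum -sumrB /=.
under eq_bigr => j _ do rewrite gact_partial_norm.
by rewrite sumrB sum_f subr0 {1}[u]orbit_decomposition fix0 add0r.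
Qed.

Section ConstantFixedMonomials.
Hypotheses (r_gt0 : (0 < r)%N)
  (fixed_const : forall m, mfixed m -> exists c, m = mconst r c).

Lemma mfixed_mconst c : mfixed (mconst r c).
Proof. by apply/eqP/mnmP => i; rewrite !mnmE. Qed.

Lemma fixed_part_homog n u : u \is n.-homog -> fixed_part u =
  if (r %| n)%N then u@_(mconst r (n %/ r)) *: 'X_[mconst r (n %/ r)] else 0.
Proof.
move=> hu; apply/mpolyP => m; rewrite mcoeff_mrestr.
have -> : (if (r %| n)%N then u@_(mconst r (n %/ r)) *: 'X_[mconst r (n %/ r)] else 0)@_m
  = if (r %| n)%N && (m == mconst r (n %/ r)) then u@_m else 0.
  case: ifP => _ /=; rewrite ?mcoeff0 // mcoeffZ mcoeffX eq_sym.
  by case: eqP => [->|_]; rewrite ?mulr1 ?mulr0.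
case: ifP => [m_fix|m_free]; last first.
  by case: ifP => // /andP[_ /eqP em]; rewrite em mfixed_mconst in m_free.
case: ifP => // m_other; case: (eqVneq u@_m 0) => // nz; exfalso.
have [c em] := fixed_const m_fix.
have deg_m : mdeg m = n.
  case: (eqVneq (mdeg m) n) => // ne.
  by rewrite (dhomog_nemf_coeff hu ne) eqxx in nz.
have en : n = (c * r)%N by rewrite -deg_m em mdeg_mconst.
by move: m_other; rewrite en dvdn_mull // mulnK // em eqxx.
Qed.

Theorem perm_Tate_poly_ord : Tate_poly_ord R p A r.
Proof.
exists 'X_[mconst r 1]; split.
  split; first by rewrite isSnE dhomogX /= mdeg_mconst mul1n.
  exact/gact_fixed_monomial/mfixed_mconst.
move=> n; split; first exact: perm_H1_zero.
have decompose u : Z0 A n u ->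
    u = fixed_part u + normop p A (rep_part u) /\ isSn n (rep_part u).
  move=> [hu hg]; rewrite isSnE in hu *.
  by split; [exact: invariant_decomposition | exact: mrestr_homog].
case: ifP => r_dvd_n.
  rewrite mpolyXn mconst_mulmn mul1n; split; last split.
  - split; first by rewrite isSnE dhomogX /= mdeg_mconst divnK.
    exact/gact_fixed_monomial/mfixed_mconst.
  - move=> [h [_ hh]]; apply: (fixed_monomial_not_norm (mfixed_mconst (n %/ r))).
    by exists h.
  - move=> u hZ; have [e hE] := decompose u hZ; have := hZ.1; rewrite isSnE => hu.
    exists u@_(mconst r (n %/ r)), (rep_part u); split => //.
    by rewrite {1}e (fixed_part_homog hu) r_dvd_n addrC addKr.
move=> u hZ; have [e hE] := decompose u hZ; have := hZ.1; rewrite isSnE => hu.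
by exists (rep_part u); split => //; rewrite {1}e (fixed_part_homog hu) r_dvd_n add0r.
Qed.

End ConstantFixedMonomials.
End PermutationLattice.

(** * The p-adic integers *)

Section PadicIntegers.
Variable p : nat.
Hypothesis p_prime : prime p.

Lemma zqE : zq p = p.
Proof. by rewrite /zq; have := prime_gt1 p_prime; case: p => [|[|q]]. Qed.

Lemma zp_natmulE (a : padic_int p) k n :
  (a *+ k) n = modz (a n * k%:Z) ((zq p ^ n.+1)%N%:Z).
Proof.
elim: k => [|k ih]; first by rewrite mulr0n /= mulr0 !mod0z.
rewrite mulrS /= ih modzDmr; congr modz.
by rewrite -addn1 PoszD mulrDr mulr1 addrC.
Qed.

Lemma padic_int_torsionfree (a : padic_int p) : a *+ p = 0 -> a = 0.
Proof.
move=> h; apply: zp_ext => n; rewrite /= mod0z.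
have := congr1 (fun b : padic_int p => b n.+1) h; rewrite zp_natmulE /= mod0z.
move/dvdz_mod0P; rewrite zqE expnSr PoszM dvdz_mul2r; last first.
  by rewrite eqz_nat -lt0n prime_gt0.
by move=> hd; rewrite (zpvalP a n) zqE; exact/dvdz_mod0P.
Qed.

Lemma padic_int_p_nonunit (a : padic_int p) : a *+ p != 1.
Proof.
apply/eqP => /(congr1 (fun b : padic_int p => b 0%N)).
by rewrite zp_natmulE /= zqE expn1 modzMl modz_small ?ltz_nat ?prime_gt1.
Qed.

End PadicIntegers.

Section TrivialAndRegularLattice.
Variable p : nat.
Hypothesis p_prime : prime p.
Let p_gt0 : (0 < p)%N := prime_gt0 p_prime.

Definition cycle_perm : 'S_p := perm (@ordS_inj p).

Lemma cycle_permX k (i : 'I_p) : val ((cycle_perm ^+ k)%g i) = ((i + k) %% p)%N.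
Proof.
elim: k => [|k ih]; first by rewrite expg0 perm1 addn0 modn_small.
by rewrite expgSr permM permE /= ih -addn1 modnDml addn1 addnS.
Qed.

Lemma cycle_perm_order : (cycle_perm ^+ p)%g = 1%g.
Proof.
by apply/permP => i; rewrite perm1; apply/val_inj; rewrite cycle_permX modnDr modn_small.
Qed.

Lemma gvars_reg (R : comNzRingType) j :
  tnth (gvars R (A_reg p)) j = 'X_(cycle_perm j).
Proof.
rewrite tnth_mktuple (bigD1 (cycle_perm j)) //= big1.
  by rewrite addr0 mxE permE eqxx /= scale1r.
by move=> i ne; rewrite mxE permE in ne *; rewrite (negbTE ne) /= scale0r.
Qed.

Lemma mfixed_reg m : mfixed cycle_perm m -> exists c, m = mconst p c.
Proof.
move=> /eqP m_fix; exists (m (Ordinal p_gt0)); apply/mnmP => i; rewrite mnmE.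
have := congr1 (fun m' : 'X_{1..p} => m' (Ordinal p_gt0)) (mperm_exp_fix i m_fix).
by rewrite mnmE => <-; congr (m _); apply/val_inj; rewrite cycle_permX add0n modn_small.
Qed.

Lemma gvars_triv (R : comNzRingType) j :
  tnth (gvars R A_triv) j = 'X_((1 : 'S_1)%g j).
Proof. by rewrite tnth_mktuple big_ord1 perm1 mxE !ord1 eqxx /= scale1r. Qed.

Lemma mfixed_triv m : mfixed (1 : 'S_1)%g m -> exists c, m = mconst 1 c.
Proof. by move=> _; exists (m ord0); apply/mnmP => i; rewrite mnmE ord1. Qed.

Variable R : comNzRingType.
Hypotheses (R_torsionfree : forall a : R, a *+ p = 0 -> a = 0)
  (R_p_nonunit : forall a : R, a *+ p != 1).

Theorem Tate_poly_ord_triv : Tate_poly_ord R p A_triv 1.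
Proof.
apply: (perm_Tate_poly_ord p_prime (expg1n _ _) (gact_msym (@gvars_triv R))) => //.
exact: mfixed_triv.
Qed.

Theorem Tate_poly_ord_reg : Tate_poly_ord R p (A_reg p) p.
Proof.
apply: (perm_Tate_poly_ord p_prime cycle_perm_order (gact_msym (@gvars_reg R))) => //.
exact: mfixed_reg.
Qed.

End TrivialAndRegularLattice.

(** * The augmentation ideal *)

Lemma dvdn_pred_modn1 d n : (1 < d)%N -> (0 < n)%N -> (d %| n.-1)%N = (n %% d == 1)%N.
Proof.
move=> d_gt1 n_gt0; rewrite /dvdn modn_pred ?(gtn_eqF d_gt1) // /dvdn.
case: (eqVneq (n %% d)%N 0%N) => [-> | nd]; first by case: d d_gt1 => [|[|d]].
by case: (n %% d)%N nd => [|[|k]].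
Qed.

Section AugmentationIdeal.
Variables (R : comNzRingType) (q : nat).
Local Notation P := q.+2.
Local Notation Q := q.+1.
Local Notation AP := (A_reg P).
Local Notation AI := (A_aug P).
Implicit Types (F G H K : {mpoly R[P]}) (f h : {mpoly R[Q]}).

Definition xvar k : {mpoly R[P]} := if (k < P)%N then 'X_(inord k) else 0.
Definition yvar k : {mpoly R[Q]} := if (k < Q)%N then 'X_(inord k) else 0.

(* In the basis y_k = e_(k+1) - e_0 of I, [evar k] is e_k - e_0 (for k <= p), so
   [piI] maps e_i to e_(i+1) - e_i: it is g - 1 : Z_p[G] -> I, whose kernel is
   spanned by the norm element [sigma]; [secI] is a linear section of [piI]. *)
Definition evar k : {mpoly R[Q]} := if k is k'.+1 then yvar k' else 0.

Definition piI_tuple : P.-tuple {mpoly R[Q]} := [tuple evar i.+1 - evar i | i < P].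
Definition piI F : {mpoly R[Q]} := F \mPo piI_tuple.
HB.instance Definition _ := GRing.LRMorphism.copy piI (comp_mpoly piI_tuple).

Definition secI_tuple : Q.-tuple {mpoly R[P]} := [tuple \sum_(j < i.+1) xvar j | i < Q].
Definition secI f : {mpoly R[P]} := f \mPo secI_tuple.
HB.instance Definition _ := GRing.LRMorphism.copy secI (comp_mpoly secI_tuple).

Definition sigma : {mpoly R[P]} := \sum_(i < P) 'X_i.

Lemma xvarE (i : 'I_P) : xvar i = 'X_i.
Proof. by rewrite /xvar ltn_ord inord_val. Qed.

Lemma yvarE (i : 'I_Q) : yvar i = 'X_i.
Proof. by rewrite /yvar ltn_ord inord_val. Qed.

Lemma evar_homog k : evar k \is 1.-homog.
Proof.
case: k => [|k] /=; first exact: rpred0.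
by rewrite /yvar; case: ifP => _; rewrite ?rpred0 // dhomogX /= mdeg1.
Qed.

Lemma piI_homog n F : F \is n.-homog -> piI F \is n.-homog.
Proof. by apply: comp_mpoly_homog => i; rewrite tnth_mktuple rpredB ?evar_homog. Qed.

Lemma secI_homog n f : f \is n.-homog -> secI f \is n.-homog.
Proof.
apply: comp_mpoly_homog => i; rewrite tnth_mktuple; apply: rpred_sum => j _.
by rewrite /xvar; case: ifP => _; rewrite ?rpred0 // dhomogX /= mdeg1.
Qed.

Lemma piIX (i : 'I_P) : piI 'X_i = evar i.+1 - evar i.
Proof. by rewrite /piI comp_mpolyXU -tnth_nth tnth_mktuple. Qed.

Lemma piI_secI f : piI (secI f) = f.
Proof.
rewrite /piI /secI comp_mpolyA -[RHS]comp_mpoly_id; congr comp_mpoly.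
apply: eq_from_tnth => i; rewrite !tnth_mktuple raddf_sum /=.
rewrite (eq_bigr (fun j : 'I_i.+1 => evar j.+1 - evar j)); last first.
  move=> j _; have jP : (j < P)%N by have := ltn_ord j; have := ltn_ord i; lia.
  by rewrite -[_ \mPo _]/(piI (xvar j)) /xvar jP piIX inordK.
by rewrite -(big_mkord xpredT (fun j => evar j.+1 - evar j)) telescope_sumr //= subr0 yvarE.
Qed.

Lemma piI_sigma : piI sigma = 0.
Proof.
rewrite raddf_sum /=; under eq_bigr do rewrite piIX.
rewrite -(big_mkord xpredT (fun j => evar j.+1 - evar j)) telescope_sumr //=.
by rewrite /yvar ltnn subrr.
Qed.

Lemma sum_indicator k :
  \sum_(i < Q) (((i : nat) == k : int)%:~R : R) *: ('X_i : {mpoly R[Q]}) = yvar k.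
Proof.
rewrite /yvar; case: ifP => hk.
  rewrite (bigD1 (inord k)) //= inordK // eqxx /= scale1r big1 ?addr0 // => i ne.
  case: eqP => [e|_]; last by rewrite scale0r.
  by rewrite -e inord_val eqxx in ne.
apply: big1 => i _; case: eqP => [e|_]; last by rewrite scale0r.
by move: (ltn_ord i); rewrite e hk.
Qed.

Lemma gvars_aug (j : 'I_Q) : tnth (gvars R AI) j = yvar j.+1 - yvar 0.
Proof.
rewrite tnth_mktuple; under eq_bigr => i _ do rewrite mxE intrB scalerBl.
by rewrite sumrB !sum_indicator.
Qed.

Lemma gact_evar k : (k <= Q)%N -> gact AI (evar k) = if k is 0 then 0 else evar k.+1 - evar 1.
Proof.
case: k => [|k] hk /=; first exact: raddf0.
by rewrite /yvar hk gactXU gvars_aug inordK.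
Qed.

Lemma piI_gact F : piI (gact AP F) = gact AI (piI F).
Proof.
rewrite /piI /gact !comp_mpolyA; congr comp_mpoly; apply: eq_from_tnth => i.
rewrite [LHS]tnth_mktuple [RHS]tnth_mktuple gvars_reg comp_mpolyXU -tnth_nth.
rewrite !tnth_mktuple -[_ \mPo gvars R AI]/(gact AI _) raddfB /=.
have := cycle_permX 1 i; rewrite expg1 addn1 => cycle_i.
have := ltn_ord i; rewrite ltnS leq_eqVlt => /orP[/eqP iQ | iQ].
  rewrite cycle_i iQ modnn (gact_evar (leqnn _)) /= /yvar ltnn.
  by rewrite (raddf0 (@gact R Q AI)) subr0 !sub0r opprK.
rewrite cycle_i modn_small // (gact_evar iQ).
case: (nat_of_ord i) iQ => [|i'] iQ /=; first by rewrite raddf0 subr0.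
by rewrite (gact_evar (ltnW iQ)) /= opprB addrA subrK.
Qed.

Lemma mcoeff_sigma m : sigma@_m = if [exists i : 'I_P, U_(i)%MM == m] then 1 else 0.
Proof.
rewrite /sigma raddf_sum /=; case: existsP => [[i /eqP <-]|ne].
  rewrite (bigD1 i) //= mcoeffX eqxx big1 ?addr0 // => j nij.
  rewrite mcoeffX; case: eqP => // /mnmP /(_ i); rewrite !mnm1E eqxx.
  by rewrite (negbTE nij).
apply: big1 => j _; rewrite mcoeffX; case: eqP => // e.
by case: ne; exists j; rewrite e.
Qed.

Lemma sigma_lreg : GRing.lreg sigma.
Proof.
have sigma_neq0 : sigma != 0.
  apply/eqP => /(congr1 (mcoeff U_(@ord0 Q)%MM)); rewrite mcoeff_sigma mcoeff0.
  by case: existsP => [_|[]]; [move/eqP; rewrite oner_eq0 | exists ord0].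
apply: lreg_mleadc; have := mlead_supp sigma_neq0.
by rewrite mcoeff_msupp mcoeff_sigma; case: ifP => _; [move=> _; exact: lreg1 | rewrite eqxx].
Qed.

Lemma sigma_homog : sigma \is 1.-homog.
Proof. by apply: rpred_sum => i _; rewrite dhomogX /= mdeg1. Qed.

Lemma mulsigma_homog n G : (0 < n)%N -> G \is n.-1.-homog -> sigma * G \is n.-homog.
Proof. by move=> n_gt0 hG; have := dhomogM sigma_homog hG; rewrite add1n prednK. Qed.

Lemma pihomog_mulsigma d G :
  pihomog mdeg d (sigma * G) = if d is d'.+1 then sigma * pihomog mdeg d' G else 0.
Proof.
have hX (m : 'X_{1..P}) : sigma * 'X_[m] \is (mdeg m).+1.-homog.
  have hm : ('X_[m] : {mpoly R[P]}) \is (mdeg m).-homog by rewrite dhomogX.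
  by have := dhomogM sigma_homog hm; rewrite add1n.
case: d => [|d].
  rewrite [G]mpolyE mulr_sumr raddf_sum /=; apply: big1 => m _.
  by rewrite -scalerAr linearZ /= (pihomog_ne0 _ (hX m)) ?scaler0.
rewrite [G]mpolyE mulr_sumr !raddf_sum /= mulr_sumr; apply: eq_bigr => m _.
rewrite -scalerAr !linearZ /= pihomogX -scalerAr; congr (_ *: _).
case: eqP => [<-|ne]; first by rewrite pihomog_dE // mulr1.
by rewrite mulr0 (pihomog_ne0 _ (hX m)) //; apply/eqP => -[].
Qed.

Lemma sigma_factor_homog n F G : F \is n.-homog -> F = sigma * G ->
  exists G', [/\ G' \is n.-1.-homog, F = sigma * G' & (n = 0%N -> G' = 0)].
Proof.
move=> hF eF; exists (if n is n'.+1 then pihomog mdeg n' G else 0); split.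
- by case: n hF eF => [|n] _ _; [exact: rpred0 | exact: pihomogP].
- by rewrite -(pihomog_dE hF) eF pihomog_mulsigma; case: n {hF eF} => [|n]; rewrite ?mulr0.
- by move=> ->.
Qed.

Lemma secI_evar k : (k <= Q)%N -> secI (evar k) = \sum_(j < k) xvar j.
Proof.
case: k => [|k] hk; first by rewrite big_ord0 raddf0.
by rewrite /= /yvar hk /secI comp_mpolyXU -tnth_nth tnth_mktuple inordK.
Qed.

(* [secI \o piI] substitutes x_(p-1) - sigma for the last variable x_(p-1). *)
Lemma secI_piI_sub F : multiple sigma (secI (piI F) - F).
Proof.
rewrite /secI /piI comp_mpolyA; apply: multiple_comp_mpoly => i; rewrite !tnth_mktuple.
rewrite -[_ \mPo secI_tuple]/(secI _) raddfB /=.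
have := ltn_ord i; rewrite ltnS leq_eqVlt => /orP[/eqP iQ | iQ].
  have -> : i = ord_max by apply/val_inj.
  have yQ : yvar Q = 0 by rewrite /yvar ltnn.
  rewrite (secI_evar (leqnn Q)) /= yQ raddf0 sub0r -opprD; apply: multipleN.
  exists 1; rewrite mulr1 /sigma [RHS]big_ord_recr /=; congr (_ + _).
  by apply: eq_bigr => j _; rewrite -xvarE.
rewrite (secI_evar iQ) (secI_evar (ltnW iQ)) big_ord_recr /= [_ + xvar i]addrC addrK.
by rewrite xvarE subrr; exact: multiple0.
Qed.

Lemma piI_eq0 n F : F \is n.-homog -> piI F = 0 ->
  exists G, [/\ G \is n.-1.-homog, F = sigma * G & (n = 0%N -> G = 0)].
Proof.
move=> hF piF0; have := secI_piI_sub F; rewrite piF0 raddf0 sub0r => /multipleN.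
by rewrite opprK => -[G eG]; exact: sigma_factor_homog hF eG.
Qed.

Lemma gact_sigma : gact AP sigma = sigma.
Proof.
rewrite raddf_sum /=; under eq_bigr do rewrite gactXU gvars_reg.
by rewrite [RHS](reindex_inj (@perm_inj _ (cycle_perm P))).
Qed.

Lemma gpow_reg_order F : gpow AP P F = F.
Proof. by rewrite (gpowE (gact_msym (@gvars_reg P R))) cycle_perm_order msym1m. Qed.

Lemma gpow_reg_X k (i : 'I_P) : gpow AP k 'X_i = 'X_((cycle_perm P ^+ k)%g i) :> {mpoly R[P]}.
Proof.
elim: k => [|k ih]; first by rewrite expg0 perm1.
by rewrite /= ih gactXU gvars_reg expgSr permM.
Qed.

Lemma normop_reg_X0 : normop P AP 'X_ord0 = sigma.
Proof.
apply: eq_bigr => k _; rewrite gpow_reg_X; congr 'X_(_).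
by apply/val_inj; rewrite cycle_permX add0n modn_small.
Qed.

Lemma piI_gpow k F : piI (gpow AP k F) = gpow AI k (piI F).
Proof. by elim: k => //= k ih; rewrite piI_gact ih. Qed.

Lemma piI_normop F : piI (normop P AP F) = normop P AI (piI F).
Proof. by rewrite raddf_sum; apply: eq_bigr => k _; rewrite /= piI_gpow. Qed.

Lemma gpow_aug_order f : gpow AI P f = f.
Proof. by rewrite -(piI_secI f) -piI_gpow gpow_reg_order. Qed.

End AugmentationIdeal.

Section AugmentationCohomology.
Variables (R : comNzRingType) (q : nat).
Local Notation P := q.+2.
Local Notation Q := q.+1.
Local Notation AP := (A_reg P).
Local Notation AI := (A_aug P).
Local Notation sigma := (@sigma R q).
Implicit Types (F G H K : {mpoly R[P]}) (f h : {mpoly R[Q]}).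

Let X0 : {mpoly R[P]} := 'X_ord0.

Lemma X0_homog : X0 \is 1.-homog.
Proof. by rewrite dhomogX /= mdeg1. Qed.

Let normop_reg_cobound := normop_gact (@gpow_reg_order R q).
Let gact_reg_normop := gact_normop (@gpow_reg_order R q).

Definition e_aug : {mpoly R[Q]} := piI X0.

Lemma normop_e_aug : normop P AI e_aug = 0.
Proof. by rewrite /e_aug -piI_normop normop_reg_X0 piI_sigma. Qed.

Variable c : {mpoly R[P]}.
Hypotheses (c_cocycle : Z0 AP P c) (H1_reg : forall n, H1_zero R P AP n)
  (H0_reg : forall n,
     if (P %| n)%N then H0_line P AP n (c ^+ (n %/ P)) else H0_zero R P AP n).

Lemma gact_c_exp k : gact AP (c ^+ k) = c ^+ k.
Proof. by rewrite rmorphXn /= c_cocycle.2. Qed.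

Lemma normop_cX0 k : normop P AP (c ^+ k * X0) = c ^+ k * sigma.
Proof. by rewrite normopMl ?gact_c_exp // normop_reg_X0. Qed.

Lemma lift_H0_aug n f : Z0 AI n f -> exists F, Z0 AP n F /\ piI F = f.
Proof.
move=> [hf gf]; rewrite isSnE in hf; have hF := secI_homog hf.
have [G [hG eG G0]] : exists G, [/\ G \is n.-1.-homog,
    gact AP (secI f) - secI f = sigma * G & (n = 0%N -> G = 0)].
  apply: piI_eq0; first by rewrite rpredB ?gact_homog.
  by rewrite raddfB /= piI_gact piI_secI gf subrr.
have [H [eH hH]] : exists H, G = gact AP H - H /\ sigma * H \is n.-homog.
  case: (posnP n) => [n0|n_gt0].
    by exists 0; rewrite G0 // raddf0 subrr mulr0 rpred0.
  have hZ : Z1 P AP n.-1 G.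
    split; first by rewrite isSnE.
    by apply: sigma_lreg; rewrite mulr0 -normopMl ?gact_sigma // -eG normop_reg_cobound.
  have [H [hH eH]] := H1_reg hZ.
  by exists H; split => //; apply: mulsigma_homog; rewrite // -isSnE.
exists (secI f - sigma * H); split.
  split; first by rewrite isSnE rpredB.
  rewrite raddfB /= rmorphM /= gact_sigma.
  have -> : gact AP (secI f) = secI f + sigma * G by rewrite -eG addrC subrK.
  by rewrite eH; ring.
by rewrite raddfB /= rmorphM /= piI_sigma mul0r subr0 piI_secI.
Qed.

Lemma H0_aug_zero n : ~~ (P %| n)%N -> H0_zero R P AI n.
Proof.
move=> not_dvd f /lift_H0_aug [F [hF <-]].
have := H0_reg n; rewrite (negbTE not_dvd) => /(_ F hF) [K [hK ->]].
by exists (piI K); split; [rewrite isSnE piI_homog // -isSnE | exact: piI_normop].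
Qed.

Lemma H0_aug_line n : (P %| n)%N -> H0_line P AI n (piI c ^+ (n %/ P)).
Proof.
move=> dvd_n; have := H0_reg n; rewrite dvd_n => -[hc [not_norm span]].
have hcn : c ^+ (n %/ P) \is n.-homog by rewrite -isSnE; exact: hc.1.
split; last split.
- split; first by rewrite isSnE -rmorphXn piI_homog.
  by rewrite -rmorphXn -piI_gact hc.2.
- move=> [h [hh e]]; rewrite -rmorphXn in e; rewrite isSnE in hh.
  have hG : c ^+ (n %/ P) - normop P AP (secI h) \is n.-homog.
    by rewrite rpredB // normop_homog // secI_homog.
  have piG : piI (c ^+ (n %/ P) - normop P AP (secI h)) = 0.
    by rewrite raddfB /= piI_normop piI_secI e subrr.
  have [G [hG' eG G0]] := piI_eq0 hG piG.
  have [K [hK eK]] : exists K, sigma * K \is n.-homog /\ G = normop P AP K.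
    case: (posnP n) => [n0|n_gt0]; first by exists 0; rewrite G0 // raddf0 mulr0 rpred0.
    have gG : gact AP G = G.
      apply: sigma_lreg; rewrite -{1}gact_sigma -rmorphM -eG raddfB /=.
      by rewrite gact_reg_normop hc.2.
    have := H0_reg n.-1; rewrite dvdn_pred_modn1 // (eqP dvd_n) /=.
    move=> /(_ G) [|K [hK eK]].
      by split; rewrite ?isSnE.
    by exists K; split; [apply: mulsigma_homog; rewrite // -isSnE |].
  apply: not_norm; exists (secI h + sigma * K); split.
    by rewrite isSnE rpredD ?secI_homog.
  by rewrite raddfD /= normopMl ?gact_sigma // -eK -eG addrC subrK.
- move=> f /lift_H0_aug [F [hF <-]]; have [a [K [hK eK]]] := span F hF.
  exists a, (piI K); split; first by rewrite isSnE piI_homog // -isSnE.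
  by rewrite -rmorphXn -linearZ -raddfB /= eK piI_normop.
Qed.

Lemma reg_invariant_decomposition n G : (n = 0%N -> G = 0) -> Z0 AP n.-1 G ->
  exists a K, [/\ G = a *: c ^+ (n %/ P) + normop P AP K, sigma * K \is n.-homog,
    a *: (c ^+ (n %/ P) * X0) \is n.-homog & ((n %% P != 1)%N -> a = 0)].
Proof.
move=> G0 hG; case: (posnP n) => [n0|n_gt0].
  by exists 0, 0; rewrite G0 // raddf0 scale0r addr0 mulr0 scale0r !rpred0.
have := H0_reg n.-1; rewrite dvdn_pred_modn1 //.
case: eqP => [/eqP n1 | _ H0_0]; last first.
  have [K [hK eK]] := H0_0 G hG.
  exists 0, K; split => //; first by rewrite scale0r add0r.
    by rewrite mulsigma_homog // -isSnE.
  by rewrite scale0r rpred0.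
rewrite divn_pred /dvdn (eqP n1) subn0 => -[hc [_ span]].
have [a [K [hK eK]]] := span G hG.
exists a, K; split => //.
- by rewrite -eK addrC subrK.
- by rewrite mulsigma_homog // -isSnE.
- apply: rpredZ; have hc' : c ^+ (n %/ P) \is n.-1.-homog by rewrite -isSnE; exact: hc.1.
  by have := dhomogM hc' X0_homog; rewrite addn1 prednK.
Qed.

(* The connecting map: the norm of a lift of a 1-cocycle of S^n(I) is sigma
   times a 0-cocycle of S^(n-1)(Z_p[G]). *)
Lemma H1_aug_decomposition n f : Z1 P AI n f ->
  exists a : R,
    B1 AI n (f - a *: (piI c ^+ (n %/ P) * e_aug)) /\ ((n %% P != 1)%N -> a = 0).
Proof.
move=> [hf Nf0]; rewrite isSnE in hf; have hF := secI_homog hf.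
have piN : piI (normop P AP (secI f)) = 0 by rewrite piI_normop piI_secI.
have [G [hG eG G0]] := piI_eq0 (normop_homog AP P hF) piN.
have gG : gact AP G = G.
  by apply: sigma_lreg; rewrite -{1}gact_sigma -rmorphM /= -eG gact_reg_normop.
have hZG : Z0 AP n.-1 G by split; rewrite ?isSnE.
have [a [K [eGK hK haX ha]]] := reg_invariant_decomposition G0 hZG.
pose F := secI f - a *: (c ^+ (n %/ P) * X0) - sigma * K.
have hZF : Z1 P AP n F.
  split; first by rewrite isSnE !rpredB.
  rewrite /F !raddfB /= linearZ /= normop_cX0 normopMl ?gact_sigma // eG eGK.
  by rewrite -!mul_mpolyC; ring.
have [H [hH eH]] := H1_reg hZF.
exists a; split => //; exists (piI H); split; first by rewrite isSnE piI_homog // -isSnE.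
have := congr1 (@piI R q) eH.
rewrite /F !raddfB /= linearZ /= !rmorphM /= rmorphXn.
by rewrite piI_sigma mul0r subr0 piI_secI piI_gact.
Qed.

Lemma H1_aug_zero n : (n %% P != 1)%N -> H1_zero R P AI n.
Proof.
move=> n_not1 f /H1_aug_decomposition [a [hB /(_ n_not1) a0]].
by rewrite a0 scale0r subr0 in hB.
Qed.

Lemma H1_aug_line n : (n %% P == 1)%N -> H1_line P AI n (piI c ^+ (n %/ P) * e_aug).
Proof.
move=> n1; have n_gt0 : (0 < n)%N by case: n n1 => //; rewrite mod0n.
have := H0_reg n.-1; rewrite dvdn_pred_modn1 // n1 divn_pred /dvdn (eqP n1) subn0.
move=> -[hc [not_norm _]].
have hcX : c ^+ (n %/ P) * X0 \is n.-homog.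
  have hc' : c ^+ (n %/ P) \is n.-1.-homog by rewrite -isSnE; exact: hc.1.
  by have := dhomogM hc' X0_homog; rewrite addn1 prednK.
split; last split.
- split; first by rewrite isSnE /e_aug -rmorphXn -rmorphM piI_homog.
  by rewrite /e_aug -rmorphXn -rmorphM -piI_normop normop_cX0 rmorphM /= piI_sigma mulr0.
- move=> [h [hh e]]; rewrite isSnE in hh.
  have hG : c ^+ (n %/ P) * X0 - (gact AP (secI h) - secI h) \is n.-homog.
    by rewrite !rpredB ?gact_homog ?secI_homog.
  have piG : piI (c ^+ (n %/ P) * X0 - (gact AP (secI h) - secI h)) = 0.
    by rewrite raddfB /= rmorphM rmorphXn /= raddfB /= piI_gact piI_secI -/e_aug e subrr.
  have [G [hG' eG _]] := piI_eq0 hG piG.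
  apply: not_norm; exists G; split; first by rewrite isSnE.
  apply: sigma_lreg; rewrite -normopMl ?gact_sigma // -eG raddfB /= normop_reg_cobound.
  by rewrite subr0 normop_cX0 mulrC.
- by move=> f /H1_aug_decomposition [a [hB _]]; exists a.
Qed.

(* The cup square of e is a 0-cocycle by [gact_cup11], hence a norm, as p does
   not divide 2. *)
Theorem Tate_poly_ext_aug_of_reg : (2 < P)%N -> Tate_poly_ext R P AI P.
Proof.
move=> P_gt2; exists (piI c), e_aug; split; last split; last split.
- split; first by rewrite isSnE piI_homog // -isSnE; exact: c_cocycle.1.
  by rewrite -piI_gact c_cocycle.2.
- by split; [rewrite isSnE piI_homog // X0_homog | exact: normop_e_aug].
- apply: H0_aug_zero; first by apply/negP => /dvdn_leq; lia.
  split.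
    rewrite isSnE; apply: rpred_sum => j _; apply: rpred_sum => i _.
    by rewrite -[2%N]/(1 + 1)%N dhomogM // gpow_homog // piI_homog // X0_homog.
  apply/eqP; rewrite -subr_eq0 (gact_cup11 (@gpow_aug_order R q)).
  by rewrite normop_e_aug mul0r mulr0 subrr.
- move=> n; split.
    by case: ifP => P_n; [exact: H0_aug_line | apply: H0_aug_zero; rewrite P_n].
  by case: ifP => n1; [exact: H1_aug_line | apply: H1_aug_zero; rewrite n1].
Qed.

End AugmentationCohomology.

Theorem corollary2p8 (p : nat) (hp : prime p) :
  (* H^*(g, S^*(Z_p)) = F_p[c], c ordinary of degree 1 *)
  Tate_poly_ord (padic_int p) p A_triv 1
  (* H^*(g, S^*(Z_p[G])) = F_p[c], c ordinary of degree p *)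
  /\ Tate_poly_ord (padic_int p) p (A_reg p) p
  (* p odd: H^*(g, S^*(I)) = F_p[c] (x) Lambda[e], c ordinary of degree p,
     e super of degree 1 *)
  /\ (odd p -> Tate_poly_ext (padic_int p) p (A_aug p) p).
Proof.
have tf := padic_int_torsionfree hp; have nu := padic_int_p_nonunit hp.
split; first exact: Tate_poly_ord_triv.
split; first exact: Tate_poly_ord_reg.
case: p hp tf nu => [|[|[|q]]] // hp tf nu _.
have [c [hc H]] := Tate_poly_ord_reg hp tf nu.
exact: (Tate_poly_ext_aug_of_reg hc (fun n => (H n).1) (fun n => (H n).2)).
Qed.
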